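(* Let $M_n$ be the Motzkin numbers, defined by $M_0=M_1=1$ and $(n+2)M_n=(2n+1)M_{n-1}+(3n-3)M_{n-2}$ for $n\ge 2$. Then $\{M_n\}_{n\ge0}$ is asymptotically $r$-log-convex for every positive integer $r$.
   Context: $\mathscr{L}a_n=a_na_{n+2}-a_{n+1}^2$, $\mathscr{L}^k a_n=\mathscr{L}(\mathscr{L}^{k-1}a_n)$. A sequence is asymptotically $r$-log-convex if there is $N$ such that $\mathscr{L}^k a_n\ge0$ for all $k=1,\dots,r$ and all $n\ge N$. *)

From mathcomp Require Import all_boot all_order all_algebra.
Set Implicit Arguments. Unset Strict Implicit. Unset Printing Implicit Defensive.
Import Order.TTheory GRing.Theory Num.Theory.
Local Open Scope ring_scope.

Fixpoint motzkin_aux (n : nat) : rat * rat :=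
  (* returns (M_n, M_{n+1}) *)
  match n with
  | 0%N => (1, 1)
  | k.+1 =>
      let: (a, b) := motzkin_aux k in
      (* a = M_k, b = M_{k+1}; compute M_{k+2} with m = k+2 *)
      (b, (((2 * k.+2 + 1)%N%:R * b + (3 * k.+2 - 3)%N%:R * a) / (k.+2 + 2)%N%:R))
  end.

Definition motzkin (n : nat) : rat := (motzkin_aux n).1.

Definition Lop (a : nat -> rat) : nat -> rat :=
  fun n => a n * a n.+2 - a n.+1 ^+ 2.

Definition Liter (k : nat) (a : nat -> rat) : nat -> rat := iter k Lop a.

Definition asympt_r_log_convex (r : nat) (a : nat -> rat) : Prop :=
  exists N : nat, forall k n : nat, (1 <= k <= r)%N -> (N <= n)%N ->
    0 <= Liter k a n.

Lemma motzkin0 : motzkin 0 = 1. Proof. by []. Qed.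
Lemma motzkin1 : motzkin 1 = 1. Proof. by []. Qed.
Lemma motzkin_rec (n : nat) : (2 <= n)%N ->
  n.+2%:R * motzkin n = (2 * n + 1)%N%:R * motzkin n.-1 + (3 * n - 3)%N%:R * motzkin n.-2.
Proof.
case: n => [|[|k]] // _.
rewrite /motzkin /= -/(motzkin_aux k).
case: (motzkin_aux k) => a b /=.
have H : (k.+2 + 2)%N%:R != 0 :> rat by rewrite pnatr_eq0 addn2.
rewrite addn2 in H *.
by rewrite mulrC -mulrA mulVf ?mulr1.
Qed.
Lemma motzkin_values : [seq motzkin i | i <- iota 0 8] = [:: 1; 1; 2; 4; 9; 21; 51; 127].
Proof. by vm_compute. Qed.

(* Write q_n = a_{n+1} / a_n and x_n = 1/(n+1).  Since L a_n = a_n a_{n+1} (q_{n+1} - q_n),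
   an expansion q_n = c0 + c1 x_n + ... + O(x_n^(K+1)) with c0 > 0 > c1 makes L a_n
   eventually positive, and the ratio of L a has again such an expansion, of order K - 2
   and with leading coefficients c0^2 > 0 > 2 c0 c1 - 2 c0^2.  So r-fold log-convexity
   follows from an expansion of order 2r.  For the Motzkin numbers q_{n+1} = f(x_n, q_n),
   where f(x, .) contracts near its fixed point 3 with multiplier -1/3.  An expansion P
   of order m is improved to order m + 1 by adding c x^(m+1), with c read off the residual
   P(x_{n+1}) - f(x_n, P(x_n)); the contraction turns a small residual into a small
   error.  The first-order coefficient -9/2 is forced since the residual's first-order
   coefficient 4/3 P_1 + 6 must vanish. *)

From mathcomp Require Import all_boot all_order all_algebra.
From mathcomp Require Import lra zify ring.
Set Implicit Arguments. Unset Strict Implicit. Unset Printing Implicit Defensive.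
Import Order.TTheory GRing.Theory Num.Theory.
Local Open Scope ring_scope.

Definition eventually (P : nat -> Prop) := exists N, forall n, (N <= n)%N -> P n.

Lemma eventually_ge N : eventually (fun n => (N <= n)%N).
Proof. by exists N. Qed.

Lemma eventually_mono (P Q : nat -> Prop) :
  (forall n, P n -> Q n) -> eventually P -> eventually Q.
Proof. by move=> PQ [N HN]; exists N => n /HN /PQ. Qed.

Lemma eventually_and (P Q : nat -> Prop) :
  eventually P -> eventually Q -> eventually (fun n => P n /\ Q n).
Proof.
move=> [N HP] [M HQ]; exists (maxn N M) => n.
by rewrite geq_max => /andP[/HP ? /HQ ?].
Qed.

Lemma eventuallyS (P : nat -> Prop) : eventually P -> eventually (fun n => P n.+1).
Proof. by move=> [N HN]; exists N => n le_Nn; apply: HN; rewrite ltnW. Qed.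

(** * Big-O and asymptotic expansions in powers of 1/(n+1) *)

Section Asymptotics.
Context {R : archiRealFieldType}.

(* Powers of 1/(n+1) rather than 1/n avoid the junk value 0^-1 = 0. *)
Definition invSn (n : nat) : R := n.+1%:R^-1.

Lemma invSn_gt0 n : 0 < invSn n.
Proof. by rewrite invr_gt0 ltr0n. Qed.

Lemma invSn_ge0 n : 0 <= invSn n.
Proof. exact/ltW/invSn_gt0. Qed.

Lemma invSn_le1 n : invSn n <= 1.
Proof. by rewrite invf_le1 ?ler1n ?ltr0n. Qed.

Lemma natr_invSn n : n.+1%:R * invSn n = 1.
Proof. by rewrite mulfV ?pnatr_eq0. Qed.

Lemma invSnS n : invSn n.+1 <= invSn n.
Proof. by rewrite lef_pV2 ?posrE ?ltr0n ?ler_nat. Qed.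

Lemma invSnXS n k : invSn n.+1 ^+ k <= invSn n ^+ k.
Proof. by rewrite lerXn2r ?nnegrE ?invSn_ge0 ?invSnS. Qed.

Lemma invSnX_le n j k : (j <= k)%N -> invSn n ^+ k <= invSn n ^+ j.
Proof. by move=> le_jk; rewrite ler_wiXn2l ?invSn_ge0 ?invSn_le1. Qed.

Lemma invSnB n : invSn n - invSn n.+1 = invSn n * invSn n.+1.
Proof.
rewrite /invSn -[n.+2%:R]natr1; field.
by have := ler0n R n => ?; apply/andP; split; apply: lt0r_neq0; lra.
Qed.

Lemma invSnS_eq n : invSn n.+1 = invSn n / (1 + invSn n).
Proof.
rewrite /invSn -[n.+2%:R]natr1; field.
by have := ler0n R n => ?; apply/andP; split; apply: lt0r_neq0; lra.
Qed.

Lemma natrX_invSnB n : n.+1%:R ^+ 2 * (invSn n.+1 - invSn n) = invSn n.+1 - 1.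
Proof.
rewrite /invSn -[n.+2%:R]natr1; field.
by have := ler0n R n => ?; apply/andP; split; apply: lt0r_neq0; lra.
Qed.

Lemma invSn_small (e : R) : 0 < e -> eventually (fun n => invSn n <= e).
Proof.
move=> e_gt0; set M := Num.bound e^-1.
have lt_M : e^-1 < M%:R by rewrite archi_boundP // invr_ge0 ltW.
exists M => n le_Mn.
rewrite -[e]invrK lef_pV2 ?posrE ?ltr0n ?invr_gt0 //.
by apply/ltW/(lt_le_trans lt_M); rewrite ler_nat ltnW.
Qed.

Definition bigO (k : nat) (u : nat -> R) :=
  exists C, eventually (fun n => `|u n| <= C * invSn n ^+ k).

Lemma bigO_eq k u v : eventually (fun n => u n = v n) -> bigO k u -> bigO k v.
Proof.
by move=> euv [C HC]; exists C; apply: eventually_mono (eventually_and euv HC) => n [<-].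
Qed.

Lemma bigO_ext k u v : (forall n, u n = v n) -> bigO k u -> bigO k v.
Proof. by move=> uv; apply: bigO_eq; exists 0%N. Qed.

Lemma bigO_domin k u v : eventually (fun n => `|v n| <= `|u n|) -> bigO k u -> bigO k v.
Proof.
move=> vu [C HC]; exists C.
by apply: eventually_mono (eventually_and vu HC) => n [/le_trans]; apply.
Qed.

Lemma bigO_cst c : bigO 0 (fun _ => c).
Proof. by exists `|c|; exists 0%N => n _; rewrite expr0 mulr1. Qed.

Lemma bigO0 k : bigO k (fun _ => 0).
Proof. by exists 0; exists 0%N => n _; rewrite normr0 mul0r. Qed.

Lemma bigO_invSnX k : bigO k (fun n => invSn n ^+ k).
Proof. by exists 1; exists 0%N => n _; rewrite mul1r ger0_norm ?exprn_ge0 ?invSn_ge0. Qed.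

Lemma bigOD k u v : bigO k u -> bigO k v -> bigO k (fun n => u n + v n).
Proof.
move=> [C HC] [D HD]; exists (C + D).
apply: eventually_mono (eventually_and HC HD) => n [hu hv].
by rewrite mulrDl (le_trans (ler_normD _ _)) ?lerD.
Qed.

Lemma bigON k u : bigO k u -> bigO k (fun n => - u n).
Proof. by move=> [C HC]; exists C; apply: eventually_mono HC => n; rewrite normrN. Qed.

Lemma bigOB k u v : bigO k u -> bigO k v -> bigO k (fun n => u n - v n).
Proof. by move=> hu /bigON; apply: bigOD. Qed.

Lemma bigOM j k u v : bigO j u -> bigO k v -> bigO (j + k) (fun n => u n * v n).
Proof.
move=> [C HC] [D HD]; exists (C * D).
apply: eventually_mono (eventually_and HC HD) => n [hu hv].
rewrite normrM exprD mulrACA.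
by apply: ler_pM.
Qed.

Lemma bigO_le j k u : (j <= k)%N -> bigO k u -> bigO j u.
Proof.
move=> le_jk [C HC]; exists `|C|; apply: eventually_mono HC => n /le_trans; apply.
apply: le_trans (ler_wpM2r (exprn_ge0 _ (invSn_ge0 n)) (ler_norm C)) _.
by rewrite ler_wpM2l ?invSnX_le.
Qed.

Lemma bigO_shift k u : bigO k u -> bigO k (fun n => u n.+1).
Proof.
move=> [C /eventuallyS HC]; exists `|C|; apply: eventually_mono HC => n /le_trans; apply.
apply: le_trans (ler_wpM2r (exprn_ge0 _ (invSn_ge0 _)) (ler_norm C)) _.
by rewrite ler_wpM2l ?invSnXS.
Qed.

Lemma bigO_natrX j k u : bigO (j + k) u -> bigO k (fun n => n.+1%:R ^+ j * u n).
Proof.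
move=> [C HC]; exists C; apply: eventually_mono HC => n hu.
rewrite normrM ger0_norm ?exprn_ge0 //.
apply: le_trans (ler_wpM2l (exprn_ge0 _ (ler0n _ _)) hu) _.
have -> : n.+1%:R ^+ j * (C * invSn n ^+ (j + k))
        = C * invSn n ^+ k * (n.+1%:R * invSn n) ^+ j by rewrite exprD exprMn; ring.
by rewrite natr_invSn expr1n mulr1.
Qed.

Lemma bigO_small u e : bigO 1 u -> 0 < e -> eventually (fun n => `|u n| <= e).
Proof.
move=> [C HC] e_gt0.
have C1_gt0 : 0 < `|C| + 1 by rewrite ltr_wpDl.
have [N HN] := invSn_small (divr_gt0 e_gt0 C1_gt0).
apply: eventually_mono (eventually_and HC (ex_intro _ N HN)) => n [/le_trans hu hx].
apply: hu; rewrite expr1.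
rewrite ler_pdivlMr // in hx.
by have := invSn_ge0 n; have := ler_norm C; nra.
Qed.

Lemma bigO1_cst c : bigO 1 (fun _ => c) -> c = 0.
Proof.
move=> hc; apply/eqP; apply: contraT => c_neq0.
have c_gt0 : 0 < `|c| by rewrite normr_gt0.
have [N HN] := bigO_small hc (divr_gt0 c_gt0 (ltr0n _ 2)).
by have := HN N (leqnn N); lra.
Qed.

Lemma bigO1_gt u b c : b < c -> bigO 1 (fun n => u n - c) -> eventually (fun n => b < u n).
Proof.
move=> lt_bc uc; have cb_gt0 : 0 < (c - b) / 2 by rewrite divr_gt0 ?subr_gt0.
apply: eventually_mono (bigO_small uc cb_gt0) => n.
by have := ler_norm (c - u n); rewrite distrC; lra.
Qed.

Lemma bigO1_neq0 u c : c != 0 -> bigO 1 (fun n => u n - c) -> eventually (fun n => u n != 0).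
Proof.
move=> c_neq0 uc; have c_gt0 : 0 < `|c| by rewrite normr_gt0.
apply: eventually_mono (bigO_small uc (divr_gt0 c_gt0 (ltr0n _ 2))) => n hu.
by apply: contraTneq hu => ->; rewrite sub0r normrN -ltNge; lra.
Qed.

Lemma bigO_horner (P : {poly R}) : bigO 0 (fun n => P.[invSn n]).
Proof.
elim/poly_ind: P => [|Q c IH]; first by apply: bigO_ext (bigO0 0) => n; rewrite horner0.
apply: bigO_ext (bigOD (bigOM IH (bigO_le (leq0n 1) (bigO_invSnX 1))) (bigO_cst c)) => n.
by rewrite hornerMXaddC.
Qed.

Lemma bigO_horner_coef0 (P : {poly R}) : bigO 1 (fun n => P.[invSn n] - P`_0).
Proof.
elim/poly_ind: P => [|Q c _]; first by apply: bigO_ext (bigO0 1) => n; rewrite horner0 coef0 subr0.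
apply: bigO_ext (bigOM (bigO_horner Q) (bigO_invSnX 1)) => n.
by rewrite hornerMXaddC coefD coefMX coefC /= add0r addrK expr1.
Qed.

Lemma bigO_inv u c : c != 0 -> bigO 1 (fun n => u n - c) -> bigO 0 (fun n => (u n)^-1).
Proof.
move=> c_neq0 uc; have c_gt0 : 0 < `|c| by rewrite normr_gt0.
exists (2 / `|c|); apply: eventually_mono (bigO_small uc (divr_gt0 c_gt0 (ltr0n _ 2))) => n hu.
have u_ge : `|c| / 2 <= `|u n|.
  by have := ler_normD (c - u n) (u n); rewrite subrK distrC; lra.
have u_gt0 : 0 < `|u n| by apply: lt_le_trans u_ge; rewrite divr_gt0.
rewrite expr0 mulr1 normfV -[2 / _]invf_div lef_pV2 ?posrE ?divr_gt0 //.
Qed.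

Lemma bigO_invSnXB k : bigO k.+1 (fun n => invSn n ^+ k - invSn n.+1 ^+ k).
Proof.
elim: k => [|k IH]; first by apply: bigO_ext (bigO0 1) => n; rewrite !expr0 subrr.
have x_y : bigO 2 (fun n => invSn n - invSn n.+1).
  by apply: bigO_ext (bigOM (bigO_invSnX 1) (bigO_shift (bigO_invSnX 1))) => n;
     rewrite invSnB !expr1.
apply: bigO_ext (bigOD (bigOM (bigO_invSnX 1) IH) (bigOM x_y (bigO_shift (bigO_invSnX k)))) => n.
by rewrite expr1 !exprS; ring.
Qed.

Lemma poly_bigO_dvdX j (P : {poly R}) :
  bigO j (fun n => P.[invSn n]) -> exists Q, P = Q * 'X^j.
Proof.
elim: j P => [|j IH] P; first by exists P; rewrite expr0 mulr1.
elim/poly_ind: P => [|Q c _] PO; first by exists 0; rewrite mul0r.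
have QX := bigOM (bigO_horner Q) (bigO_invSnX 1).
have c0 : c = 0.
  apply/bigO1_cst/(bigO_ext _ (bigOB (bigO_le (ltn0Sn j) PO) QX)) => n.
  by rewrite hornerMXaddC expr1 addrC addKr.
have [Q' ->] : exists Q', Q = Q' * 'X^j.
  apply: IH; apply: bigO_ext (bigO_natrX (k := j) (j := 1)
                                 (u := fun n => Q.[invSn n] * invSn n) _) => [n|].
    by rewrite expr1 mulrCA natr_invSn mulr1.
  by apply: bigO_ext PO => n; rewrite c0 addr0 hornerMX.
by exists Q'; rewrite c0 addr0 -mulrA -exprSr.
Qed.

Lemma bigOX j m u : bigO j u -> bigO (j * m) (fun n => u n ^+ m).
Proof.
move=> hu; elim: m => [|m IH].
  by rewrite muln0; apply: bigO_ext (bigO_cst 1) => n; rewrite expr0.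
by rewrite mulnS; apply: bigO_ext (bigOM hu IH) => n; rewrite exprS.
Qed.

Lemma expr1D_le (a : R) m : 0 <= a -> 2 * m%:R * a <= 1 -> (1 + a) ^+ m <= 1 + 2 * m%:R * a.
Proof.
move=> a_ge0; elim: m => [|m IH] le_1; first by rewrite expr0 mulr0 mul0r addr0.
have le_m : 2 * m%:R * a <= 1.
  by apply: le_trans le_1; rewrite ler_wpM2r // ler_wpM2l // ler_nat.
rewrite -natr1 in le_1 *; rewrite exprS.
have := ler_wpM2l (addr_ge0 ler01 a_ge0) (IH le_m).
by nra.
Qed.

Lemma invSnX_ratio n m : (8 * m <= n)%N -> invSn n ^+ m <= 5/4 * invSn n.+1 ^+ m.
Proof.
move=> le_8m.
have x_y : invSn n = invSn n.+1 * (1 + invSn n).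
  by rewrite invSnS_eq mulfVK // gt_eqF // ltr_wpDr ?invSn_ge0.
have small : 2 * m%:R * invSn n <= 1/4.
  have : (8 * m)%:R * invSn n <= n.+1%:R * invSn n.
    by rewrite ler_wpM2r ?invSn_ge0 // ler_nat ltnW.
  by rewrite natr_invSn natrM; have := invSn_ge0 n; lra.
rewrite {1}x_y exprMn mulrC ler_wpM2r ?exprn_ge0 ?invSn_ge0 //.
by apply: le_trans (expr1D_le (invSn_ge0 n) _) _; lra.
Qed.

Lemma bigO_contraction m (e d : nat -> R) :
  bigO m d -> eventually (fun n => `|e n.+1| <= 2/3 * `|e n| + `|d n|) -> bigO m e.
Proof.
move=> [C HC] He.
have [N HN] := eventually_and (eventually_and He HC) (eventually_ge (8 * m)).
set B := 8 * `|C| + `|e N| * N.+1%:R ^+ m.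
exists B; exists N => n le_Nn; rewrite -(subnKC le_Nn).
elim: (n - N)%N => [|i IH].
  rewrite addn0 mulrDl.
  have -> : `|e N| * N.+1%:R ^+ m * invSn N ^+ m = `|e N|.
    by rewrite -mulrA -exprMn natr_invSn expr1n mulr1.
  by rewrite ler_wpDl ?mulr_ge0 ?exprn_ge0 ?invSn_ge0.
have [[contr hd] le_8m] := HN (N + i)%N (leq_addr i N).
(* Rescaling from x_n^m to x_(n+1)^m costs a factor 5/4, and 2/3 * 5/4 < 1. *)
have ratio := invSnX_ratio le_8m; rewrite addnS.
move: (invSn (N + i) ^+ m) (invSn (N + i).+1 ^+ m) (exprn_ge0 m (invSn_ge0 (N + i)))
  (exprn_ge0 m (invSn_ge0 (N + i).+1)) IH hd ratio => X Y X_ge0 Y_ge0 IH hd ratio.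
have B_ge : 8 * `|C| <= B by rewrite ler_wpDr ?mulr_ge0 ?exprn_ge0.
have C_X : C * X <= `|C| * X by rewrite ler_wpM2r ?ler_norm.
have B_ge0 : 0 <= B by apply: le_trans B_ge; apply: mulr_ge0.
have BC_ge0 : 0 <= 2/3 * B + `|C| by have := normr_ge0 C; lra.
have := ler_wpM2l BC_ge0 ratio.
have := mulr_ge0 B_ge0 Y_ge0.
have : 0 <= (B - 8 * `|C|) * Y by rewrite mulr_ge0 ?subr_ge0.
lra.
Qed.

Definition asymp (K : nat) (u : nat -> R) (c0 c1 : R) :=
  exists P : {poly R}, [/\ P`_0 = c0, P`_1 = c1 & bigO K.+1 (fun n => u n - P.[invSn n])].

Lemma asymp_bigO K u v c0 c1 :
  bigO K.+1 (fun n => u n - v n) -> asymp K v c0 c1 -> asymp K u c0 c1.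
Proof.
move=> uv [P [P0 P1 vP]]; exists P; split => //.
by apply: bigO_ext (bigOD uv vP) => n; rewrite addrA subrK.
Qed.

Lemma asymp_eq K u v a0 a1 b0 b1 : asymp K v a0 a1 ->
  eventually (fun n => v n = u n) -> a0 = b0 -> a1 = b1 -> asymp K u b0 b1.
Proof.
move=> hv vu <- <-; apply: asymp_bigO hv; apply: bigO_eq (bigO0 K.+1).
by apply: eventually_mono vu => n ->; rewrite subrr.
Qed.

Lemma asymp_le J K u c0 c1 : (J <= K)%N -> asymp K u c0 c1 -> asymp J u c0 c1.
Proof. by move=> le_JK [P [P0 P1 uP]]; exists P; split => //; apply: bigO_le uP. Qed.

Lemma asymp_poly K (P : {poly R}) : asymp K (fun n => P.[invSn n]) P`_0 P`_1.
Proof. by exists P; split; rewrite //; apply: bigO_ext (bigO0 _) => n; rewrite subrr. Qed.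

Lemma asymp_cst K c : asymp K (fun _ => c) c 0.
Proof.
by apply: (asymp_eq (asymp_poly K c%:P)); rewrite ?coefC //; exists 0%N => n _; rewrite hornerC.
Qed.

Lemma asymp_invSn K : asymp K invSn 0 1.
Proof.
by apply: (asymp_eq (asymp_poly K 'X)); rewrite ?coefX //; exists 0%N => n _; rewrite hornerX.
Qed.

Lemma asymp_bigO1 K u c0 c1 : asymp K u c0 c1 -> bigO 1 (fun n => u n - c0).
Proof.
move=> [P [<- _ uP]].
by apply: bigO_ext (bigOD (bigO_le (ltn0Sn K) uP) (bigO_horner_coef0 P)) => n; rewrite addrA subrK.
Qed.

Lemma asympD K u v a0 a1 b0 b1 : asymp K u a0 a1 -> asymp K v b0 b1 ->
  asymp K (fun n => u n + v n) (a0 + b0) (a1 + b1).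
Proof.
move=> [P [P0 P1 uP]] [Q [Q0 Q1 vQ]]; exists (P + Q); rewrite !coefD P0 P1 Q0 Q1; split => //.
by apply: bigO_ext (bigOD uP vQ) => n; rewrite hornerD addrACA opprD.
Qed.

Lemma coef1M (P Q : {poly R}) : (P * Q)`_1 = P`_0 * Q`_1 + P`_1 * Q`_0.
Proof. by rewrite coefM !big_ord_recl big_ord0 addr0. Qed.

Lemma asympM K u v a0 a1 b0 b1 : asymp K u a0 a1 -> asymp K v b0 b1 ->
  asymp K (fun n => u n * v n) (a0 * b0) (a0 * b1 + a1 * b0).
Proof.
move=> [P [P0 P1 uP]] [Q [Q0 Q1 vQ]].
exists (P * Q); rewrite coef0M coef1M P0 P1 Q0 Q1; split => //.
have v_bd : bigO 0 v.
  by apply: bigO_ext (bigOD (bigO_le (leq0n _) vQ) (bigO_horner Q)) => n; rewrite subrK.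
apply: bigO_ext (bigOD (bigOM v_bd uP) (bigOM (bigO_horner P) vQ)) => n.
by rewrite hornerM; ring.
Qed.

Lemma asymp_horner K v b1 (Q : {poly R}) : asymp K v 0 b1 ->
  asymp K (fun n => Q.[v n]) Q`_0 (Q`_1 * b1).
Proof.
move=> hv; elim/poly_ind: Q => [|Q c IH].
  apply: (asymp_eq (asymp_cst K 0)); rewrite ?coef0 ?mul0r //.
  by exists 0%N => n _; rewrite horner0.
apply: (asymp_eq (asympD (asympM IH hv) (asymp_cst K c))).
- by exists 0%N => n _; rewrite hornerMXaddC.
- by rewrite coefD coefMX coefC mulr0 add0r.
- by rewrite coefD coefMX coefC /= mulr0 !addr0.
Qed.

Definition alt_geom (m : nat) : {poly R} := \sum_(j < m) (-1) ^+ j *: 'X^j.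

Lemma coef_alt_geom m i : (i < m)%N -> (alt_geom m)`_i = (-1) ^+ i.
Proof.
move=> lt_im; rewrite coef_sum (bigD1 (Ordinal lt_im)) //= coefZ coefXn eqxx mulr1.
rewrite big1 ?addr0 // => j ne_ji; rewrite coefZ coefXn.
by rewrite eq_sym -(inj_eq val_inj) /= in ne_ji; rewrite (negbTE ne_ji) mulr0.
Qed.

Lemma alt_geomE m x : (1 + x) * (alt_geom m).[x] = 1 - (- x) ^+ m.
Proof.
rewrite -{2}(expr1n R m) subrXX opprK horner_sum; congr (_ * _).
by apply: eq_bigr => j _; rewrite hornerZ hornerXn expr1n mul1r -exprNn.
Qed.

Lemma asympV K u a0 a1 : a0 != 0 -> asymp K u a0 a1 ->
  asymp K (fun n => (u n)^-1) a0^-1 (- (a1 / a0 ^+ 2)).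
Proof.
move=> a0_neq0 hu; have u_a0 := asymp_bigO1 hu.
pose t n := u n / a0 - 1.
have ht : asymp K t 0 (a1 / a0).
  have := asympD (asympM hu (asymp_cst K a0^-1)) (asymp_cst K (-1)).
  by rewrite mulfV // subrr mulr0 add0r addr0.
pose G := alt_geom K.+2.
have hG : asymp K (fun n => a0^-1 * G.[t n]) a0^-1 (- (a1 / a0 ^+ 2)).
  apply: (asymp_eq (asympM (asymp_cst K a0^-1) (asymp_horner G ht))).
  - by exists 0%N.
  - by rewrite coef_alt_geom // mulr1.
  - by rewrite !coef_alt_geom // mul0r addr0; field.
apply: asymp_bigO hG.
have t_O1 : bigO 1 (fun n => - t n).
  by apply: bigON; apply: bigO_ext (asymp_bigO1 ht) => n; rewrite subr0.
have rem := bigOM (bigOX K.+2 t_O1) (bigO_inv a0_neq0 u_a0).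
rewrite mul1n addn0 in rem.
apply: bigO_eq (bigO_le (leqnSn _) rem).
apply: eventually_mono (bigO1_neq0 a0_neq0 u_a0) => n u_neq0.
have u_t : u n = a0 * (1 + t n) by rewrite /t; field.
have t1_neq0 : 1 + t n != 0 by apply: contraNneq u_neq0 => t1; rewrite u_t t1 mulr0.
have G_t : G.[t n] = (1 - (- t n) ^+ K.+2) / (1 + t n) by rewrite -alt_geomE; field.
by rewrite G_t u_t; field; rewrite a0_neq0 t1_neq0.
Qed.

Lemma asymp_invSnS K : asymp K (fun n => invSn n.+1) 0 1.
Proof.
have one_neq0 : (1 : R) + 0 != 0 by rewrite addr0 oner_eq0.
apply: (asymp_eq (asympM (asymp_invSn K) (asympV one_neq0 (asympD (asymp_cst K 1) (asymp_invSn K))))).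
- by exists 0%N => n _; rewrite invSnS_eq.
- by rewrite mul0r.
- by rewrite addr0 invr1 mul0r add0r mulr1.
Qed.

Lemma asymp_shift K u a0 a1 : asymp K u a0 a1 -> asymp K (fun n => u n.+1) a0 a1.
Proof.
move=> [P [P0 P1 uP]]; have := asymp_horner P (asymp_invSnS K).
by rewrite mulr1 P0 P1; apply: asymp_bigO; apply: bigO_shift uP.
Qed.

Lemma asymp_diff_horner K (P : {poly R}) : exists d1,
  asymp K (fun n => n.+1%:R ^+ 2 * (P.[invSn n.+1] - P.[invSn n])) (- P`_1) d1.
Proof.
elim/poly_ind: P => [|Q c [d IH]].
  exists 0; apply: (asymp_eq (asymp_cst K 0)); rewrite ?coef0 ?oppr0 //.
  by exists 0%N => n _; rewrite !horner0 subrr mulr0.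
eexists; apply: (asymp_eq (asympD (asympM IH (asymp_invSnS K))
  (asympM (asymp_poly K Q) (asympD (asymp_invSnS K) (asymp_cst K (-1)))))) => //.
- by exists 0%N => n _; rewrite !hornerMXaddC -natrX_invSnB; ring.
- by rewrite coefD coefMX coefC /= addr0 mulr0 !add0r mulrN1.
Qed.

Lemma asymp_diff K u a0 a1 : asymp K.+2 u a0 a1 ->
  exists d1, asymp K (fun n => n.+1%:R ^+ 2 * (u n.+1 - u n)) (- a1) d1.
Proof.
move=> [P [_ <- uP]]; have [d1 hD] := asymp_diff_horner K P.
exists d1; apply: asymp_bigO hD.
apply: bigO_ext (bigO_natrX (j := 2) (bigOB (bigO_shift uP) uP)) => n.
by ring.
Qed.

Lemma asymp_lead m u c0 c1 : asymp m u c0 c1 -> bigO m u ->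
  exists r, bigO m.+1 (fun n => u n - r * invSn n ^+ m).
Proof.
move=> [P [_ _ uP]] hu.
have [Q PQ] : exists Q, P = Q * 'X^m.
  by apply: poly_bigO_dvdX; apply: bigO_ext (bigOB hu (bigO_le (leqnSn m) uP)) => n; rewrite subKr.
exists Q`_0; apply: bigO_ext (bigOD uP (bigOM (bigO_horner_coef0 Q) (bigO_invSnX m))) => n.
by rewrite PQ hornerM hornerXn; ring.
Qed.

Lemma asymp_bigO2_coef1 K u c0 c1 : asymp K.+1 u c0 c1 -> bigO 2 u -> c1 = 0.
Proof.
move=> [P [_ <- uP]] hu.
have [Q ->] : exists Q, P = Q * 'X^2.
  by apply: poly_bigO_dvdX; apply: bigO_ext (bigOB hu (bigO_le (isT : (2 <= K.+2)%N) uP)) => n; rewrite subKr.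
by rewrite coefMXn.
Qed.

End Asymptotics.

(** * Expansions of a_(n+1) / a_n and the operator L *)

Definition succ_ratio (a : nat -> rat) n := a n.+1 / a n.

Definition ratio_asymp K (a : nat -> rat) :=
  eventually (fun n => 0 < a n) /\
  exists c0 c1, [/\ 0 < c0, c1 < 0 & asymp K (succ_ratio a) c0 c1].

Definition ratio_incr (a : nat -> rat) n :=
  n.+1%:R ^+ 2 * (succ_ratio a n.+1 - succ_ratio a n).

Lemma Lop_ratio_incr a n : a n != 0 -> a n.+1 != 0 ->
  Lop a n = a n * a n.+1 * ratio_incr a n * invSn n ^+ 2.
Proof.
move=> a0 a1; have -> : a n * a n.+1 * ratio_incr a n * invSn n ^+ 2
    = a n * a n.+1 * (succ_ratio a n.+1 - succ_ratio a n) * (n.+1%:R * invSn n) ^+ 2.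
  by rewrite /ratio_incr exprMn; ring.
by rewrite natr_invSn expr1n mulr1 /Lop /succ_ratio; field; rewrite a0 a1.
Qed.

Lemma succ_ratio_Lop a n : a n != 0 -> a n.+1 != 0 -> a n.+2 != 0 -> ratio_incr a n != 0 ->
  succ_ratio (Lop a) n = succ_ratio a n * succ_ratio a n.+1 *
                         (ratio_incr a n.+1 / ratio_incr a n) * (1 + invSn n) ^- 2.
Proof.
move=> a0 a1 a2 w0; rewrite /succ_ratio !Lop_ratio_incr // invSnS_eq.
have x_gt0 : 0 < invSn n :> rat := invSn_gt0 n.
have x1_gt0 : 0 < 1 + invSn n :> rat by rewrite addr_gt0.
by field; rewrite a0 a1 w0 (lt0r_neq0 x_gt0) (lt0r_neq0 x1_gt0).
Qed.

Lemma ratio_asymp_Lop K a : ratio_asymp K.+2 a -> ratio_asymp K (Lop a).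
Proof.
move=> [a_pos [c0 [c1 [c0_gt0 c1_lt0 hq]]]].
have [d1 hw] : exists d1, asymp K (ratio_incr a) (- c1) d1 := asymp_diff hq.
have w_pos : eventually (fun n => 0 < ratio_incr a n).
  by apply: bigO1_gt (asymp_bigO1 hw); rewrite oppr_gt0.
have pos := eventually_and (eventually_and a_pos (eventuallyS a_pos))
                           (eventually_and (eventuallyS (eventuallyS a_pos)) w_pos).
split.
  apply: eventually_mono pos => n [[a0 a1] [_ w0]].
  rewrite (Lop_ratio_incr (lt0r_neq0 a0) (lt0r_neq0 a1)).
  apply: mulr_gt0; last exact/exprn_gt0/invSn_gt0.
  by apply: mulr_gt0; first apply: mulr_gt0.
exists (c0 ^+ 2), (2 * c0 * c1 - 2 * c0 ^+ 2); split; [exact: exprn_gt0 | nra |].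
have hq' := asymp_le (ltnW (leqnSn K.+1)) hq.
have one_neq0 : (1 : rat) + 0 != 0 by rewrite addr0 oner_eq0.
have hy := asympV one_neq0 (asympD (asymp_cst K 1) (asymp_invSn K)).
have c1_neq0 : - c1 != 0 by rewrite oppr_eq0 lt_eqF.
apply: (asymp_eq (asympM (asympM (asympM hq' (asymp_shift hq'))
                               (asympM (asymp_shift hw) (asympV c1_neq0 hw))) (asympM hy hy)));
  [| by field; rewrite lt_eqF | by field; rewrite lt_eqF].
apply: eventually_mono pos => n [[a0 a1] [a2 w0]].
rewrite (succ_ratio_Lop (lt0r_neq0 a0) (lt0r_neq0 a1) (lt0r_neq0 a2) (lt0r_neq0 w0)).
by rewrite -exprVn expr2.
Qed.

Lemma ratio_asymp_Liter k K a : (2 * k <= K)%N -> ratio_asymp K a ->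
  eventually (fun n => forall j, (j <= k)%N -> 0 < Liter j a n).
Proof.
elim: k K a => [|k IH] K a le_kK ha.
  by apply: eventually_mono ha.1 => n a_pos [|j] // _.
case: K le_kK ha => [|[|K]] le_kK ha; [lia | lia |].
have {}le_kK : (2 * k <= K)%N by lia.
apply: eventually_mono (eventually_and ha.1 (IH K (Lop a) le_kK (ratio_asymp_Lop ha))) => n.
by move=> [a_pos L_pos] [|j] // le_jk; rewrite /Liter iterSr; apply: L_pos.
Qed.

(** * Motzkin numbers *)

Lemma motzkin_gt0 n : 0 < motzkin n.
Proof.
suff : 0 < motzkin n /\ 0 < motzkin n.+1 by case.
elim: n => [|n [M0 M1]]; first by rewrite motzkin0 motzkin1.
split => //; have := motzkin_rec (n := n.+2) isT => /= rec.
have : 0 < n.+4%:R * motzkin n.+2 by rewrite rec addr_gt0 // mulr_gt0 // ltr0n; lia.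
by rewrite pmulr_rgt0.
Qed.

(* (n+4) M_(n+2) = (2n+5) M_(n+1) + (3n+3) M_n divided by (n+1) M_(n+1), with x = 1/(n+1). *)
Definition motzkin_step (x t : rat) := (2 + 3 * x + 3 / t) / (1 + 3 * x).

Lemma motzkin_ratioS n : succ_ratio motzkin n.+1 = motzkin_step (invSn n) (succ_ratio motzkin n).
Proof.
have := motzkin_rec (n := n.+2) isT => /=.
rewrite (_ : (2 * n.+2 + 1 = 2 * n.+1 + 3)%N); last by lia.
rewrite (_ : (3 * n.+2 - 3 = 3 * n.+1)%N); last by lia.
rewrite (_ : n.+4 = n.+1 + 3)%N; last by lia.
rewrite /succ_ratio /motzkin_step /invSn !natrD !natrM.
have := motzkin_gt0 n; have := motzkin_gt0 n.+1; have := ltr0Sn rat n.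
move: n.+1%:R (motzkin n) (motzkin n.+1) (motzkin n.+2) => N M0 M1 M2 N_gt0 M1_gt0 M0_gt0 rec.
have N3_gt0 : 0 < N + 3 by lra.
have -> : M2 = ((2 * N + 3) * M1 + 3 * N * M0) / (N + 3).
  by rewrite -rec; field; rewrite gt_eqF.
by field; rewrite !gt_eqF.
Qed.

Lemma motzkin_stepB x s p : 0 <= x -> s != 0 -> p != 0 ->
  motzkin_step x s - motzkin_step x p = 3 / (1 + 3 * x) * (p - s) / (s * p).
Proof.
move=> x_ge0 s_neq0 p_neq0; have x3_gt0 : 0 < 1 + 3 * x by lra.
by rewrite /motzkin_step; field; rewrite s_neq0 p_neq0 (lt0r_neq0 x3_gt0).
Qed.

Lemma motzkin_step_lipschitz x s p : 0 <= x -> 19/10 <= s -> 29/10 <= p ->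
  `|motzkin_step x s - motzkin_step x p| <= 2/3 * `|s - p|.
Proof.
move=> x_ge0 s_ge p_ge.
have s_gt0 : 0 < s by lra.
have p_gt0 : 0 < p by lra.
rewrite (motzkin_stepB x_ge0 (lt0r_neq0 s_gt0) (lt0r_neq0 p_gt0)).
set A := 3 / (1 + 3 * x).
have A_gt0 : 0 < A by apply: divr_gt0; lra.
have A_le3 : A <= 3 by rewrite ler_pdivrMr; lra.
have sp_ge : 551/100 <= s * p.
  have : 0 <= (s - 19/10) * (p - 29/10) by apply: mulr_ge0; lra.
  lra.
have sp_gt0 : 0 < s * p by apply: mulr_gt0.
rewrite -mulrA normrM (gtr0_norm A_gt0) normf_div (gtr0_norm sp_gt0) distrC.
rewrite mulrA (ler_pdivrMr _ _ sp_gt0).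
have d_ge0 := normr_ge0 (s - p).
have := ler_wpM2r d_ge0 A_le3; have := ler_wpM2r d_ge0 sp_ge.
lra.
Qed.

Lemma motzkin_ratio_ge : eventually (fun n => 19/10 <= succ_ratio motzkin n).
Proof.
have [N HN] := invSn_small (isT : (0 : rat) < 1/27).
exists N.+1 => -[|n] lt_Nn; first by rewrite ltn0 in lt_Nn.
rewrite motzkin_ratioS /motzkin_step.
have x_ge0 := @invSn_ge0 rat n.
have x3_gt0 : 0 < 1 + 3 * invSn n :> rat by lra.
have q_ge0 : 0 <= 3 / succ_ratio motzkin n.
  by apply: divr_ge0; [lra | apply/ltW/divr_gt0; apply: motzkin_gt0].
by rewrite (ler_pdivlMr _ _ x3_gt0); have := HN n lt_Nn; lra.
Qed.

Definition motzkin_residual (P : {poly rat}) n :=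
  P.[invSn n.+1] - motzkin_step (invSn n) P.[invSn n].

Lemma motzkin_poly_ge (P : {poly rat}) : P`_0 = 3 -> eventually (fun n => 29/10 < P.[invSn n]).
Proof. by move=> P0; apply: (bigO1_gt (isT : (29/10 : rat) < 3)); rewrite -P0; apply: bigO_horner_coef0. Qed.

Lemma motzkin_ratio_bigO (P : {poly rat}) m : P`_0 = 3 ->
  bigO m (motzkin_residual P) -> bigO m (fun n => succ_ratio motzkin n - P.[invSn n]).
Proof.
move=> P0 res_O; apply: bigO_contraction res_O _.
apply: eventually_mono (eventually_and motzkin_ratio_ge (motzkin_poly_ge P0)) => n [q_ge p_ge].
have := motzkin_step_lipschitz (invSn_ge0 n) q_ge (ltW p_ge).
rewrite motzkin_ratioS /motzkin_residual.
set fq := motzkin_step _ (succ_ratio motzkin n); set fp := motzkin_step _ P.[_].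
set e := succ_ratio motzkin n - _; clearbody fq fp e.
by have := ler_normB (fq - fp) (P.[invSn n.+1] - fp); rewrite opprB addrA subrK; lra.
Qed.

Lemma motzkin_residual_bigO (P : {poly rat}) m : P`_0 = 3 ->
  bigO m (fun n => succ_ratio motzkin n - P.[invSn n]) -> bigO m (motzkin_residual P).
Proof.
move=> P0 e_O.
have f_O : bigO m (fun n => motzkin_step (invSn n) (succ_ratio motzkin n)
                            - motzkin_step (invSn n) P.[invSn n]).
  apply: bigO_domin e_O.
  apply: eventually_mono (eventually_and motzkin_ratio_ge (motzkin_poly_ge P0)) => n [q_ge p_ge].
  have := motzkin_step_lipschitz (invSn_ge0 n) q_ge (ltW p_ge).
  by have := normr_ge0 (succ_ratio motzkin n - P.[invSn n]); lra.
apply: bigO_ext (bigOB f_O (bigO_shift e_O)) => n.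
rewrite motzkin_ratioS /motzkin_residual.
set fq := motzkin_step _ (succ_ratio motzkin n); set fp := motzkin_step _ P.[_].
by clearbody fq fp; ring.
Qed.

Lemma motzkin_residual_asymp K (P : {poly rat}) : P`_0 = 3 ->
  asymp K (motzkin_residual P) 0 (4/3 * P`_1 + 6).
Proof.
move=> P0; have hP := asymp_poly K P; rewrite P0 in hP.
have three_neq0 : (3 : rat) != 0 by [].
have x3_neq0 : (1 : rat) + 3 * 0 != 0 by [].
have num := asympD (asympD (asymp_cst K 2) (asympM (asymp_cst K 3) (asymp_invSn K)))
                   (asympM (asymp_cst K 3) (asympV three_neq0 hP)).
have den := asympV x3_neq0 (asympD (asymp_cst K 1) (asympM (asymp_cst K 3) (asymp_invSn K))).
apply: (asymp_eq (asympD (asymp_shift hP) (asympM (asymp_cst K (-1)) (asympM num den)))).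
- by exists 0%N => n _; rewrite /motzkin_residual /motzkin_step; ring.
- by field.
- by field.
Qed.

(* Near the fixed point 3, motzkin_step x has multiplier -1/3, so adding c X^m to P
   shifts the residual by 4/3 c x^m + O(x^(m+1)). *)
Lemma motzkin_residual_correct (P : {poly rat}) m r : (0 < m)%N -> P`_0 = 3 ->
  bigO m.+1 (fun n => motzkin_residual P n - r * invSn n ^+ m) ->
  bigO m.+1 (motzkin_residual (P + (-3/4 * r) *: 'X^m)).
Proof.
move=> m_gt0 P0 res_O; set c := -3/4 * r; set P' := P + c *: 'X^m.
have P'x z : P'.[z] = P.[z] + c * z ^+ m by rewrite hornerD hornerZ hornerXn.
have P'0 : P'`_0 = 3 by rewrite coefD coefZ coefXn -(prednK m_gt0) mulr0 addr0.
pose g n := 3 / (1 + 3 * invSn n) / (P.[invSn n] * P'.[invSn n]).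
have [g1 hg] : exists g1, asymp 0 g (1/3) g1.
  have x3_neq0 : (1 : rat) + 3 * 0 != 0 by [].
  have nine_neq0 : (3 : rat) * 3 != 0 by [].
  have hP := asymp_poly 0 P; have hP' := asymp_poly 0 P'; rewrite P0 in hP; rewrite P'0 in hP'.
  eexists; apply: (asymp_eq (asympM (asympM (asymp_cst 0 3)
      (asympV x3_neq0 (asympD (asymp_cst 0 1) (asympM (asymp_cst 0 3) (asymp_invSn 0)))))
      (asympV nine_neq0 (asympM hP hP')))) => //.
  by exists 0%N.
have g_O : bigO 1 (fun n => g n - 1/3) := asymp_bigO1 hg.
apply: bigO_eq (bigOD (bigOD res_O (bigOM (bigO_cst (- c)) (bigO_invSnXB m)))
                      (bigOM g_O (bigOM (bigO_cst c) (bigO_invSnX m)))).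
apply: eventually_mono (eventually_and (motzkin_poly_ge P0) (motzkin_poly_ge P'0)) => n [p_ge p'_ge].
have x3_gt0 : 0 < 1 + 3 * invSn n :> rat by have := @invSn_ge0 rat n; lra.
have p_neq0 : P.[invSn n] != 0 by apply: lt0r_neq0; lra.
rewrite P'x in p'_ge; have p'_neq0 : P.[invSn n] + c * invSn n ^+ m != 0 by apply: lt0r_neq0; lra.
have -> : r = -4/3 * c by rewrite /c; field.
rewrite /motzkin_residual /motzkin_step /g !P'x.
by field; rewrite p_neq0 p'_neq0 (lt0r_neq0 x3_gt0).
Qed.

Lemma motzkin_ratio_refine (P : {poly rat}) m : P`_0 = 3 ->
  bigO m.+1 (fun n => succ_ratio motzkin n - P.[invSn n]) ->
  exists P' : {poly rat}, P'`_0 = 3 /\ bigO m.+2 (fun n => succ_ratio motzkin n - P'.[invSn n]).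
Proof.
move=> P0 e_O.
have [r res_O] := asymp_lead (motzkin_residual_asymp m.+1 P0) (motzkin_residual_bigO P0 e_O).
exists (P + (-3/4 * r) *: 'X^(m.+1)); split; first by rewrite coefD coefZ coefXn mulr0 addr0.
by apply: motzkin_ratio_bigO; [rewrite coefD coefZ coefXn mulr0 addr0 | exact: motzkin_residual_correct].
Qed.

Lemma motzkin_ratio_expansion m : exists P : {poly rat},
  P`_0 = 3 /\ bigO m.+1 (fun n => succ_ratio motzkin n - P.[invSn n]).
Proof.
elim: m => [|m [P [P0 e_O]]]; last exact: motzkin_ratio_refine P0 e_O.
have C0 : (3%:P : {poly rat})`_0 = 3 by rewrite coefC.
exists 3%:P; split; first exact: C0.
apply: (motzkin_ratio_bigO C0).
by apply: bigO_ext (asymp_bigO1 (motzkin_residual_asymp 0 C0)) => n; rewrite subr0.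
Qed.

Lemma ratio_asymp_motzkin K : ratio_asymp K motzkin.
Proof.
split; first by exists 0%N => n _; apply: motzkin_gt0.
exists 3, (-9/2); split; [lra | lra |].
have [P [P0 e_O]] := motzkin_ratio_expansion K.+1.
have res_O := motzkin_residual_bigO P0 (bigO_le (isT : (2 <= K.+2)%N) e_O).
have P1 : P`_1 = -9/2.
  by have := asymp_bigO2_coef1 (motzkin_residual_asymp 1 P0) res_O; lra.
by exists P; split; [exact: P0 | exact: P1 | exact: bigO_le e_O].
Qed.

Theorem mainTheorem4 : forall r : nat, (0 < r)%N -> asympt_r_log_convex r motzkin.
Proof.
move=> r _; have [N HN] := ratio_asymp_Liter (leqnn _) (ratio_asymp_motzkin (2 * r)).
by exists N => k n /andP[_ le_kr] le_Nn; apply/ltW/HN.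
Qed.
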